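(* Let $n\in\mathbb{N}$. If $\mathbf{s}=(s_0,\ldots,s_n)\subset[0,\infty)$ is strictly positive on $(0,\infty)$, then $T_\infty(\mathbf{s})=\infty$.
   Context: For $a<b$, $\mathbf{s}$ is strictly positive on $[a,b]$ if the functional $\sigma(x^k)=s_k$ on real polynomials of degree $\le n$ satisfies $\sigma(P)\ge0$ for all $P\ge0$ on $[a,b]$ and $\sigma(P)>0$ for all such $P\not\equiv0$; strictly positive on $(0,\infty)$ means strictly positive on some $[a,b]\subset(0,\infty)$. $\mathcal{M}_{a,b}(\mathbf{s})$ is the set of positive Borel measures on $[a,b]$ with $k$-th moments $s_k$; $T_{a,b}(\mathbf{s})=\sup\{\int_{[a,b]}\frac1t\,d\mu:\mu\in\mathcal{M}_{a,b}(\mathbf{s})\}$ (with $\sup\varnothing=-\infty$) and $T_\infty(\mathbf{s})=\sup_{0<a<b}T_{a,b}(\mathbf{s})$. *)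

From HB Require Import structures.
From mathcomp Require Import all_boot all_order all_algebra.
From mathcomp Require Import all_classical all_reals all_analysis.
Set Implicit Arguments. Unset Strict Implicit. Unset Printing Implicit Defensive.
Import Order.TTheory GRing.Theory Num.Theory.
Local Open Scope classical_set_scope.
Local Open Scope ring_scope.

Definition sigma (R : realType) (n : nat) (s : 'I_n.+1 -> R) (P : {poly R}) : R :=
  \sum_(k < n.+1) P`_k * s k.

Definition strictly_pos_on (R : realType) (n : nat) (s : 'I_n.+1 -> R) (a b : R) : Prop :=
  a < b /\
  forall P : {poly R}, (size P <= n.+1)%N ->
    (forall x, a <= x <= b -> 0 <= P.[x]) ->
    0 <= sigma s P /\ (P != 0 -> 0 < sigma s P).

Definition strictly_pos_on_pos (R : realType) (n : nat) (s : 'I_n.+1 -> R) : Prop :=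
  exists a b : R, 0 < a /\ strictly_pos_on s a b.

(* M_{a,b}(s): positive Borel measures on [a,b] (represented as Borel measures
   on R carried by [a,b]) whose k-th moments are s_k, k = 0..n. *)
Definition moment_measures (R : realType) (n : nat) (s : 'I_n.+1 -> R) (a b : R)
  : set {measure set R -> \bar R} :=
  [set mu | mu (~` `[a, b]) = 0%E /\
    forall k : 'I_n.+1, (\int[mu]_(x in `[a, b]) ((x ^+ k)%:E) = (s k)%:E)%E].

(* T_{a,b}(s) = sup { int_{[a,b]} 1/t dmu : mu in M_{a,b}(s) }  (sup of empty = -oo). *)
Definition T_ab (R : realType) (n : nat) (s : 'I_n.+1 -> R) (a b : R) : \bar R :=
  ereal_sup [set (\int[mu]_(x in `[a, b]) ((x^-1)%:E))%E | mu in moment_measures s a b].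

Definition T_infty (R : realType) (n : nat) (s : 'I_n.+1 -> R) : \bar R :=
  ereal_sup [set T_ab s ab.1 ab.2 | ab in [set ab : R * R | 0 < ab.1 /\ ab.1 < ab.2]].

(* Strict positivity of sigma on [a, b], a > 0, makes its Hankel form positive
   definite; this yields Gauss quadrature and, after factoring out X - g, Radau
   rules with a prescribed node g < a, all with positive weights.  Comparing the
   Radau rules with nodes c and 0 on the squared node polynomial of the first
   shows that the weight at c stays above some w0 > 0 as c -> 0 (for odd n one
   takes the Radau rule of P |-> sigma((b - X) P) and adds b as a node).  Such a
   rule is the moment data of an atomic measure on [c, b] against which 1/t
   integrates to at least w0 / c, so T_{c,b}(s) is unbounded. *)

From HB Require Import structures.
From mathcomp Require Import all_boot all_order all_algebra.
From mathcomp Require Import all_classical all_reals all_analysis.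
From mathcomp Require Import measurable_realfun polyrcf.
From mathcomp Require Import ring lra.

Set Implicit Arguments.
Unset Strict Implicit.
Unset Printing Implicit Defensive.
Import Order.TTheory GRing.Theory Num.Theory.
Local Open Scope classical_set_scope.
Local Open Scope ring_scope.

Section Quadrature.
Variable R : rcfType.
Implicit Types (L : {poly R} -> R) (P Q T q w : {poly R}) (S : seq (R * R)) (Y : seq R).

Definition linear_functional L := forall c P Q, L (c *: P + Q) = c * L P + L Q.

Definition nonneg_on P (a b : R) := forall x, a <= x <= b -> 0 <= P.[x].

Definition constant_sign_on P (a b : R) := nonneg_on P a b \/ nonneg_on (- P) a b.

Definition positive_on L d (a b : R) :=
  forall P, (size P <= d)%N -> nonneg_on P a b -> P != 0 -> 0 < L P.

(* The rule with nodes [p.1] and weights [p.2] is exact in degree < d. *)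
Definition quadrature L d S :=
  forall P, (size P <= d)%N -> L P = \sum_(p <- S) p.2 * P.[p.1].

Definition orthogonal_poly L k w :=
  [/\ w \is monic, size w = k.+1 & forall Q, (size Q <= k)%N -> L (w * Q) = 0].

Lemma poly_expand P d : (size P <= d)%N -> P = \sum_(i < d) P`_i *: 'X^i.
Proof.
move=> sP; rewrite -poly_def; apply/polyP => i; rewrite coef_poly.
by case: ltnP => // /(leq_trans sP) /leq_sizeP ->.
Qed.

Lemma rVpolyE d (v : 'rV[R]_d) : rVpoly v = \sum_(i < d) v 0 i *: 'X^i.
Proof.
have sv : (size (rVpoly v) <= d)%N by exact: size_poly.
by rewrite {1}(poly_expand sv); apply: eq_bigr => i _; rewrite coef_rVpoly_ord.
Qed.

Lemma size_mul_self_leq P d : (size P <= d)%N -> (size (P * P)%R <= d.*2)%N.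
Proof.
move=> sP; apply: leq_trans (size_polyMleq _ _) (leq_trans (leq_pred _) _).
by rewrite -addnn leq_add.
Qed.

Section LinearFunctional.
Variable L : {poly R} -> R.
Hypothesis linL : linear_functional L.

Lemma functional0 : L 0 = 0.
Proof.
by have := linL 1 0 0; rewrite scale1r addr0 mul1r -[LHS]addr0 => /addrI <-.
Qed.

Lemma functionalD P Q : L (P + Q) = L P + L Q.
Proof. by have := linL 1 P Q; rewrite scale1r mul1r. Qed.

Lemma functionalZ c P : L (c *: P) = c * L P.
Proof. by have := linL c P 0; rewrite !addr0 functional0 addr0. Qed.

Lemma functionalN P : L (- P) = - L P.
Proof. by rewrite -scaleN1r functionalZ mulN1r. Qed.

Lemma functional_sum I (r : seq I) (F : I -> {poly R}) :
  L (\sum_(i <- r) F i) = \sum_(i <- r) L (F i).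
Proof. exact: (big_morph L functionalD functional0). Qed.

Lemma linear_functional_mull q : linear_functional (fun P => L (q * P)).
Proof. by move=> c P Q; rewrite mulrDr functionalD -scalerAr functionalZ. Qed.

Lemma positive_on_constant_sign d a b P : positive_on L d a b ->
  (size P <= d)%N -> constant_sign_on P a b -> P != 0 -> L P != 0.
Proof.
move=> posL sP [P0|NP0] nzP; first by rewrite gt_eqF ?posL.
by rewrite -oppr_eq0 -functionalN gt_eqF ?posL ?size_opp ?oppr_eq0.
Qed.

End LinearFunctional.

Section Sign.
Variables a b : R.

Lemma constant_sign_on_noroot w :
  (forall y, a < y < b -> ~~ root w y) -> constant_sign_on w a b.
Proof.
move=> noroot; have [|not_nonneg] := pselect (nonneg_on w a b); [by left | right].
move/existsNP: not_nonneg => [x /not_implyP [xab /negP]]; rewrite -ltNge => wx.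
have nochange u v : a <= u -> v <= b -> u <= v -> 0 <= w.[u] * w.[v].
  move=> au vb uv; rewrite leNgt; apply/negP => /(poly_ivtoo uv) [y].
  rewrite in_itv /= => /andP [uy yv]; apply/negP/noroot.
  by rewrite (le_lt_trans au uy) (lt_le_trans yv vb).
move=> y /andP [ay yb]; rewrite hornerN oppr_ge0 leNgt; apply/negP => wy.
case/andP: xab => ax xb; have [xy|yx] := leP x y.
  by have := nochange _ _ ax yb xy; rewrite leNgt pmulr_llt0 // wx.
by have := nochange _ _ ay xb (ltW yx); rewrite leNgt pmulr_rlt0 // wx.
Qed.

Lemma constant_sign_on_mul_sqr P q :
  constant_sign_on P a b -> constant_sign_on (P * q ^+ 2) a b.
Proof.
by case=> P0; [left|right] => x xab; rewrite -?mulNr hornerM mulr_ge0 ?P0 // hornerE sqr_ge0.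
Qed.

Lemma constant_sign_on_mul_roots w : exists Y, [/\ uniq Y,
  {in Y, forall y, a < y < b /\ root w y}
  & constant_sign_on (w * \prod_(y <- Y) ('X - y%:P)) a b].
Proof.
move: {2}(size w) (leqnn (size w)) => N; elim: N w => [|N IH] w sw.
  rewrite size_poly_leq0 in sw; exists [::]; rewrite (eqP sw) mul0r.
  by split => //; left => x _; rewrite horner0.
have [[y [yab wy]] | noroot] := pselect (exists y, a < y < b /\ root w y); last first.
  exists [::]; rewrite big_nil mulr1; split => //.
  by apply: constant_sign_on_noroot => y yab; apply/negP => wy; apply: noroot; exists y.
set w1 := w %/ ('X - y%:P).
have ew : w = w1 * ('X - y%:P) by rewrite divpK // dvdp_XsubCl.
have sw1 : (size w1 <= N)%N.
  by rewrite size_divp ?polyXsubC_eq0 // size_XsubC succnK leq_subLR add1n.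
have [Y [uY Y_roots sgn]] := IH w1 sw1.
have w1_roots z : z \in Y -> a < z < b /\ root w z.
  by move=> /Y_roots [zab w1z]; rewrite ew rootM w1z.
have [yY | yNY] := boolP (y \in Y).
  exists (rem y Y); split; first exact: rem_uniq.
    by move=> z /mem_rem; apply: w1_roots.
  by move: sgn; rewrite (perm_big _ (perm_to_rem yY)) big_cons mulrA -ew.
exists (y :: Y); split; first by rewrite /= yNY.
  by move=> z; rewrite in_cons => /predU1P [-> //|]; apply: w1_roots.
have -> : w * \prod_(z <- y :: Y) ('X - z%:P) =
          w1 * \prod_(z <- Y) ('X - z%:P) * ('X - y%:P) ^+ 2.
  by rewrite big_cons ew; ring.
exact: constant_sign_on_mul_sqr.
Qed.

End Sign.

Definition lagrange_basis Y y : {poly R} :=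
  (\prod_(z <- rem y Y) (y - z))^-1 *: \prod_(z <- rem y Y) ('X - z%:P).

Section Lagrange.
Variable Y : seq R.
Hypothesis uY : uniq Y.

Lemma horner_lagrange_basis y x : (lagrange_basis Y y).[x] =
  (\prod_(z <- rem y Y) (y - z))^-1 * \prod_(z <- rem y Y) (x - z).
Proof.
by rewrite hornerZ horner_prod; congr (_ * _); apply: eq_bigr => z _; rewrite hornerXsubC.
Qed.

Lemma lagrange_basis_self y : (lagrange_basis Y y).[y] = 1.
Proof.
rewrite horner_lagrange_basis mulVf // prodf_seq_neq0; apply/allP => z.
by rewrite mem_rem_uniq // inE => /andP [zy _] /=; rewrite subr_eq0 eq_sym.
Qed.

Lemma lagrange_basis_node y z : z \in Y -> z != y -> (lagrange_basis Y y).[z] = 0.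
Proof.
move=> zY zy; rewrite horner_lagrange_basis [X in _ * X](big_rem z) /=.
  by rewrite subrr mul0r mulr0.
by rewrite mem_rem_uniq // inE zy.
Qed.

Lemma lagrange_basis_sum_nodes y (F : R -> R) : y \in Y ->
  \sum_(z <- Y) F z * (lagrange_basis Y y).[z] = F y.
Proof.
move=> yY; rewrite (big_rem y) //= lagrange_basis_self mulr1 big_seq big1 ?addr0 //.
by move=> z; rewrite mem_rem_uniq // inE => /andP [zy zY]; rewrite lagrange_basis_node ?mulr0.
Qed.

Lemma lagrange_basis_sum_basis y (F : R -> R) : y \in Y ->
  \sum_(z <- Y) F z * (lagrange_basis Y z).[y] = F y.
Proof.
move=> yY; rewrite (big_rem y) //= lagrange_basis_self mulr1 big_seq big1 ?addr0 //.
move=> z; rewrite mem_rem_uniq // inE => /andP [zy zY].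
by rewrite lagrange_basis_node ?mulr0 // eq_sym.
Qed.

Lemma size_lagrange_basis y : y \in Y -> (size (lagrange_basis Y y) <= size Y)%N.
Proof.
move=> yY; apply: leq_trans (size_scale_leq _ _) _.
by rewrite size_prod_XsubC size_rem // prednK // lt0n size_eq0; apply: contraTneq yY => ->.
Qed.

Lemma lagrange_interpolation P : (size P <= size Y)%N ->
  P = \sum_(y <- Y) P.[y] *: lagrange_basis Y y.
Proof.
move=> sP; apply/eqP; rewrite -subr_eq0; set D := _ - _.
have sD : D \is a poly_of_size (size Y).
  rewrite rpredB // big_seq rpred_sum // => y yY.
  by rewrite rpredZ //; apply: size_lagrange_basis.
have DY : all (root D) Y.
  apply/allP => y yY; rewrite /root hornerD hornerN horner_sum.
  by under eq_bigr do rewrite hornerZ; rewrite lagrange_basis_sum_basis // subrr.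
by apply: contraTT sD => nzD; rewrite qualifE /= -ltnNge max_poly_roots.
Qed.

End Lagrange.

Section Gauss.
Variable L : {poly R} -> R.
Hypothesis linL : linear_functional L.
Variables (a b : R) (k : nat).
Hypothesis posL : positive_on L k.*2 a b.

Let hankel : 'M[R]_k := \matrix_(i, j) L 'X^(i + j).

Lemma functional_rVpoly_mulXn (v : 'rV[R]_k) (j : 'I_k) :
  L (rVpoly v * 'X^j) = (v *m hankel) 0 j.
Proof.
rewrite rVpolyE mulr_suml (functional_sum linL) mxE.
by apply: eq_bigr => i _; rewrite -scalerAl -exprD (functionalZ linL) mxE.
Qed.

Lemma hankel_unitmx : hankel \in unitmx.
Proof.
rewrite -row_free_unit; apply: inj_row_free => v vH.
have sq0 : L (rVpoly v * rVpoly v) = 0.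
  rewrite {2}rVpolyE mulr_sumr (functional_sum linL) big1 // => j _.
  by rewrite -scalerAr (functionalZ linL) functional_rVpoly_mulXn vH mxE mulr0.
have : rVpoly v * rVpoly v == 0.
  apply/negPn/negP => nz; suff : 0 < L (rVpoly v * rVpoly v) by rewrite sq0 ltxx.
  apply: posL nz => [|x _]; last by rewrite hornerM -expr2 sqr_ge0.
  exact/size_mul_self_leq/size_poly.
by rewrite mulf_eq0 orbb => /eqP /(congr1 (@poly_rV _ k)); rewrite rVpolyK linear0.
Qed.

Lemma orthogonal_poly_exists : exists w, orthogonal_poly L k w.
Proof.
pose v := \row_(j < k) - L 'X^(k + j) *m invmx hankel.
have vH : v *m hankel = \row_(j < k) - L 'X^(k + j) by rewrite mulmxKV ?hankel_unitmx.
have sv : (size (rVpoly v) < size ('X^k : {poly R}))%N by rewrite size_polyXn ltnS size_poly.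
exists ('X^k + rVpoly v); split.
- by rewrite monicE lead_coefDl // lead_coefXn.
- by rewrite size_polyDl // size_polyXn.
move=> Q sQ; rewrite (poly_expand sQ) mulr_sumr (functional_sum linL) big1 // => j _.
rewrite -scalerAr (functionalZ linL) mulrDl (functionalD linL) -exprD.
by rewrite functional_rVpoly_mulXn vH mxE addrN mulr0.
Qed.

Lemma orthogonal_poly_roots w : orthogonal_poly L k w ->
  exists Y, [/\ uniq Y, size Y = k & {in Y, forall y, a < y < b /\ root w y}].
Proof.
case=> mw sw orth; have nzw : w != 0 := monic_neq0 mw.
have [Y [uY Y_roots sgn]] := constant_sign_on_mul_roots a b w.
exists Y; split => //; apply/eqP; rewrite eqn_leq; apply/andP; split.
  by rewrite -ltnS -sw max_poly_roots //; apply/allP => y /Y_roots [].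
rewrite leqNgt; apply/negP => sY.
set q := \prod_(y <- Y) ('X - y%:P).
have sq : size q = (size Y).+1 by rewrite size_prod_XsubC.
have nzq : q != 0 by rewrite -size_poly_gt0 sq.
have : L (w * q) != 0.
  apply: (positive_on_constant_sign linL posL) sgn _; last by rewrite mulf_neq0.
  by rewrite size_mul // sw sq addSn /= -addnn leq_add2l.
by rewrite orth ?sq ?eqxx.
Qed.

Lemma lagrange_quadrature w Y : orthogonal_poly L k w -> uniq Y -> size Y = k ->
  {in Y, forall y, root w y} ->
  quadrature L k.*2 [seq (y, L (lagrange_basis Y y)) | y <- Y].
Proof.
case=> mw sw orth uY sY Y_roots P sP; have nzw : w != 0 := monic_neq0 mw.
have sdiv : (size (P %/ w)%R <= k)%N.
  by rewrite size_divp // sw succnK leq_subLR addnn.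
have smod : (size (P %% w)%R <= size Y)%N by rewrite sY -ltnS -sw ltn_modp.
rewrite big_map (divp_eq P w) (functionalD linL) mulrC orth // add0r.
rewrite {1}(lagrange_interpolation uY smod) (functional_sum linL).
apply: eq_big_seq => y yY; rewrite (functionalZ linL) [LHS]mulrC /=.
by rewrite hornerD hornerM (rootP (Y_roots y yY)) mul0r add0r.
Qed.

Lemma gauss_quadrature : exists S, [/\ size S = k,
  {in S, forall p, a < p.1 < b /\ 0 < p.2} & quadrature L k.*2 S].
Proof.
have [w ow] := orthogonal_poly_exists.
have [Y [uY sY Y_roots]] := orthogonal_poly_roots ow.
have rule := lagrange_quadrature ow uY sY (fun y yY => (Y_roots y yY).2).
exists [seq (y, L (lagrange_basis Y y)) | y <- Y]; split => //; first by rewrite size_map.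
move=> _ /mapP [y yY ->] /=; split; first by have [] := Y_roots y yY.
set l := lagrange_basis Y y.
have nzl : l != 0.
  by apply/eqP => l0; have := lagrange_basis_self uY y; rewrite -/l l0 horner0 => /esym/eqP; rewrite oner_eq0.
have sl2 : (size (l * l)%R <= k.*2)%N by rewrite size_mul_self_leq // -sY size_lagrange_basis.
have -> : L l = L (l * l).
  rewrite [RHS]rule // big_map /=; under eq_bigr do rewrite hornerM mulrA.
  by rewrite lagrange_basis_sum_nodes // /l (lagrange_basis_self uY) mulr1.
by apply: posL sl2 _ (mulf_neq0 nzl nzl) => x _; rewrite hornerM -expr2 sqr_ge0.
Qed.

End Gauss.

Definition nonneg_rule_on S (c b : R) := {in S, forall p, c <= p.1 <= b /\ 0 <= p.2}.

Definition node_poly S := \prod_(p <- S) ('X - p.1%:P).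

Lemma horner_node_poly_sqr S x :
  (node_poly S ^+ 2).[x] = \prod_(p <- S) (x - p.1) ^+ 2.
Proof.
by rewrite horner_exp horner_prod -prodrXl; apply: eq_bigr => p _; rewrite hornerXsubC.
Qed.

Lemma size_node_poly_sqr S : size (node_poly S ^+ 2) = (size S).*2.+1.
Proof.
rewrite expr2 size_mul ?monic_neq0 ?monic_prod_XsubC // size_prod_XsubC.
by rewrite addSn addnS addnn.
Qed.

Lemma node_poly_sqr_neq0 S : node_poly S ^+ 2 != 0.
Proof. by rewrite -size_poly_gt0 size_node_poly_sqr. Qed.

Lemma node_poly_sqr_ge0 S x : 0 <= (node_poly S ^+ 2).[x].
Proof. by rewrite horner_exp sqr_ge0. Qed.

Lemma root_node_poly_sqr S p : p \in S -> root (node_poly S ^+ 2) p.1.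
Proof.
by move=> pS; rewrite /root horner_node_poly_sqr (big_rem p) //= subrr expr0n mul0r.
Qed.

Lemma node_poly_sqr_gt0 S x : {in S, forall p, p.1 != x} -> 0 < (node_poly S ^+ 2).[x].
Proof.
move=> Sx; rewrite horner_node_poly_sqr big_seq prodr_gt0 // => p pS.
by rewrite exprn_even_gt0 // subr_eq0 (eq_sym x) Sx.
Qed.

Lemma quadrature_cons_vanish L d g W S P : quadrature L d ((g, W) :: S) ->
  (size P <= d)%N -> {in S, forall p, root P p.1} -> L P = W * P.[g].
Proof.
move=> rule sP P0; rewrite rule // big_cons big_seq big1 ?addr0 // => p pS.
by rewrite (rootP (P0 p pS)) mulr0.
Qed.

Lemma positive_on_mull L d a b q : (size q <= 2)%N -> q != 0 -> nonneg_on q a b ->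
  positive_on L d.+1 a b -> positive_on (fun P => L (q * P)) d a b.
Proof.
move=> sq nzq q0 posL P sP P0 nzP; apply: posL; last exact: mulf_neq0.
  apply: leq_trans (size_polyMleq _ _) _; rewrite -subn1 leq_subLR add1n.
  by rewrite (leq_trans (leq_add sq sP)) ?add2n.
by move=> x xab; rewrite hornerM mulr_ge0 ?q0 ?P0.
Qed.

(* Write P = P(e) + (X - e) Q and integrate Q with the given rule. *)
Lemma quadrature_add_node L d S c e : linear_functional L -> c != 0 ->
  {in S, forall p, p.1 != e} ->
  quadrature (fun P => L (c *: ('X - e%:P) * P)) d S ->
  quadrature L d.+1 ((e, L 1 - \sum_(p <- S) p.2 / (c * (p.1 - e))) ::
                     [seq (p.1, p.2 / (c * (p.1 - e))) | p <- S]).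
Proof.
move=> linL nzc Se rule P sP.
set Q := (P - P.[e]%:P) %/ ('X - e%:P).
have eQ : Q * ('X - e%:P) = P - P.[e]%:P.
  by rewrite divpK // dvdp_XsubCl /root hornerD hornerN hornerC subrr.
have eP : P = P.[e] *: 1 + c *: ('X - e%:P) * (c^-1 *: Q).
  rewrite -scalerAl -scalerAr scalerA mulfV // scale1r mulrC eQ.
  by rewrite -mul_polyC mulr1 addrC subrK.
have sQ : (size (c^-1 *: Q) <= d)%N.
  apply: leq_trans (size_scale_leq _ _) _.
  rewrite size_divp ?polyXsubC_eq0 // size_XsubC succnK leq_subLR.
  apply: leq_trans (size_polyD _ _) _; rewrite size_opp geq_max.
  by rewrite (leq_trans sP) // (leq_trans (size_polyC_leq1 _)).
have Qx x : x != e -> Q.[x] = (P.[x] - P.[e]) / (x - e).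
  move=> xe; have := congr1 (horner^~ x) eQ.
  rewrite hornerM hornerXsubC hornerD hornerN hornerC => <-.
  by rewrite mulfK // subr_eq0.
rewrite {1}eP (functionalD linL) (functionalZ linL) (rule _ sQ) big_cons big_map /=.
have -> : \sum_(p <- S) p.2 * (c^-1 *: Q).[p.1] =
    \sum_(p <- S) (p.2 / (c * (p.1 - e)) * P.[p.1] - p.2 / (c * (p.1 - e)) * P.[e]).
  apply: eq_big_seq => p pS; rewrite hornerZ Qx ?Se //.
  by field; rewrite subr_eq0 Se ?nzc.
by rewrite sumrB -mulr_suml; ring.
Qed.

Lemma quadrature_weight_gt0 L d a b g W S T : positive_on L d a b ->
  quadrature L d ((g, W) :: S) -> (size T <= d)%N -> nonneg_on T a b ->
  {in S, forall p, root T p.1} -> 0 < T.[g] -> 0 < W.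
Proof.
move=> posL rule sT T0 ST Tg; rewrite -(pmulr_lgt0 _ Tg) -(quadrature_cons_vanish rule sT ST).
by apply: posL => //; apply: contraTneq Tg => ->; rewrite horner0 ltxx.
Qed.

Lemma radau_quadrature L m a b g : linear_functional L -> g < a ->
  positive_on L m.*2.+1 a b -> exists W S, [/\ 0 < W, size S = m,
    {in S, forall p, a < p.1 < b /\ 0 < p.2} & quadrature L m.*2.+1 ((g, W) :: S)].
Proof.
move=> linL ga posL.
have posLg : positive_on (fun P => L (1 *: ('X - g%:P) * P)) m.*2 a b.
  apply: positive_on_mull posL; rewrite ?scale1r ?size_XsubC ?polyXsubC_eq0 //.
  by move=> x /andP [ax _]; rewrite hornerXsubC subr_ge0 ltW // (lt_le_trans ga ax).
have [S0 [sS0 S0_ab rule0]] := gauss_quadrature (linear_functional_mull linL _) posLg.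
have S0g : {in S0, forall p, p.1 != g}.
  by move=> p /S0_ab [/andP [ap _] _]; rewrite gt_eqF // (lt_trans ga ap).
have := quadrature_add_node linL (oner_neq0 R) S0g rule0.
set W := L 1 - _; set S := map _ _ => rule.
exists W, S; split; first 1 last.
- by rewrite size_map.
- move=> _ /mapP [p pS0 ->] /=; have [/andP [ap pb] p2] := S0_ab p pS0.
  by rewrite ap pb mul1r divr_gt0 // subr_gt0 (lt_trans ga ap).
- exact: rule.
apply: (quadrature_weight_gt0 posL rule) (node_poly_sqr_gt0 S0g).
- by rewrite size_node_poly_sqr sS0.
- by move=> x _; apply: node_poly_sqr_ge0.
- by move=> _ /mapP [p pS0 ->]; apply: root_node_poly_sqr pS0.
Qed.

(* For T the squared node polynomial of the rule at c,
   W T(c) = L T >= W0 T(0) >= W0 T(c), the last step because all nodes exceed c. *)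
Lemma radau_weight_lower_bound L m a b : linear_functional L -> 0 < a ->
  positive_on L m.*2.+1 a b -> exists2 W0, 0 < W0 & forall c, 0 < c < a ->
  exists W S, [/\ W0 <= W, size S = m, {in S, forall p, a < p.1 < b /\ 0 < p.2}
    & quadrature L m.*2.+1 ((c, W) :: S)].
Proof.
move=> linL a0 posL.
have [W0 [S0 [W0_gt0 _ S0_ab rule0]]] := radau_quadrature linL a0 posL.
exists W0 => // c /andP [c0 ca].
have [W [S [_ sS S_ab rule]]] := radau_quadrature linL ca posL.
exists W, S; split => //.
set T := node_poly S ^+ 2.
have sT : (size T <= m.*2.+1)%N by rewrite size_node_poly_sqr sS.
have LT : L T = W * T.[c].
  by apply: (quadrature_cons_vanish rule sT) => p pS; apply: root_node_poly_sqr.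
have LT_ge : W0 * T.[0] <= L T.
  rewrite rule0 // big_cons lerDl big_seq sumr_ge0 // => p pS0.
  by rewrite mulr_ge0 ?node_poly_sqr_ge0 // ltW // (S0_ab p pS0).2.
have Tc_le : T.[c] <= T.[0].
  rewrite !horner_node_poly_sqr big_seq [leRHS]big_seq; apply: ler_prod => p pS.
  have [/andP [ap _] _] := S_ab p pS; have cp : c < p.1 := lt_trans ca ap.
  rewrite sqr_ge0 /=; nra.
have Tc : 0 < T.[c].
  by apply: node_poly_sqr_gt0 => p /S_ab [/andP [ap _] _]; rewrite gt_eqF // (lt_trans ca ap).
by rewrite -(ler_pM2r Tc) -LT (le_trans _ LT_ge) // ler_wpM2l ?(ltW W0_gt0).
Qed.

Lemma heavy_node_quadrature_even L m a b : linear_functional L -> 0 < a -> a < b ->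
  positive_on L m.*2.+1 a b -> exists2 w0, 0 < w0 & forall c, 0 < c < a ->
  exists S W, [/\ quadrature L m.*2.+1 S, nonneg_rule_on S c b, (c, W) \in S & w0 <= W].
Proof.
move=> linL a0 ab posL; have [W0 W0_gt0 radau] := radau_weight_lower_bound linL a0 posL.
exists W0 => // c cca; have /andP [c0 ca] := cca.
have [W [S [W0W _ S_ab rule]]] := radau c cca.
exists ((c, W) :: S), W; split; rewrite ?mem_head //.
move=> p; rewrite in_cons => /predU1P [-> | /S_ab [/andP [ap pb] p2]] /=.
  by rewrite lexx (ltW (lt_trans ca ab)) (le_trans (ltW W0_gt0)).
by rewrite !ltW // (lt_trans ca ap).
Qed.

Lemma radau_add_endpoint L m a b c W S : linear_functional L -> 0 < c < a -> a < b ->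
  positive_on L m.*2.+2 a b -> 0 <= W -> size S = m ->
  {in S, forall p, a < p.1 < b /\ 0 < p.2} ->
  quadrature (fun P => L (-1 *: ('X - b%:P) * P)) m.*2.+1 ((c, W) :: S) ->
  exists S', [/\ quadrature L m.*2.+2 S', nonneg_rule_on S' c b & (c, W / (b - c)) \in S'].
Proof.
move=> linL /andP [c0 ca] ab posL W0 sS S_ab rule; have cb := lt_trans ca ab.
have nzN1 : (-1 : R) != 0 by rewrite oppr_eq0 oner_eq0.
have Sb : {in (c, W) :: S, forall p, p.1 != b}.
  by move=> p; rewrite in_cons => /predU1P [-> | /S_ab [/andP [_ pb] _]]; rewrite lt_eqF.
have := quadrature_add_node linL nzN1 Sb rule.
set V := L 1 - _; set S' := map _ _ => rule'.
have V_gt0 : 0 < V.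
  apply: (quadrature_weight_gt0 posL rule') (_ : 0 < (('X - c%:P) * node_poly S ^+ 2).[b]).
  - by rewrite size_mul ?polyXsubC_eq0 ?node_poly_sqr_neq0 // size_XsubC size_node_poly_sqr sS.
  - move=> x /andP [ax _]; rewrite hornerM hornerXsubC mulr_ge0 ?node_poly_sqr_ge0 //.
    by rewrite subr_ge0 ltW // (lt_le_trans ca ax).
  - move=> x /mapP [p]; rewrite in_cons => /predU1P [-> -> | pS ->] /=.
      by rewrite rootM root_XsubC eqxx.
    by rewrite rootM root_node_poly_sqr ?orbT.
  - rewrite hornerM hornerXsubC mulr_gt0 ?subr_gt0 // node_poly_sqr_gt0 // => p.
    by move=> /S_ab [/andP [_ pb] _]; rewrite lt_eqF.
exists ((b, V) :: S'); split => //; last by rewrite /S' /= !in_cons mulN1r opprB eqxx orbT.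
move=> p; rewrite in_cons => /predU1P [-> | /mapP [p' p'S ->]] /=.
  by rewrite (ltW cb) lexx (ltW V_gt0).
have [/andP [cp pb] p2] : c <= p'.1 < b /\ 0 <= p'.2.
  move: p'S; rewrite in_cons => /predU1P [-> | /S_ab [/andP [ap pb] p2]] /=.
    by rewrite lexx cb.
  by rewrite pb !ltW // (lt_trans ca ap).
by rewrite cp (ltW pb) mulN1r opprB divr_ge0 // subr_ge0 ltW.
Qed.

Lemma heavy_node_quadrature_odd L m a b : linear_functional L -> 0 < a -> a < b ->
  positive_on L m.*2.+2 a b -> exists2 w0, 0 < w0 & forall c, 0 < c < a ->
  exists S W, [/\ quadrature L m.*2.+2 S, nonneg_rule_on S c b, (c, W) \in S & w0 <= W].
Proof.
move=> linL a0 ab posL; have b0 := lt_trans a0 ab.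
pose q := -1 *: ('X - b%:P).
have posLb : positive_on (fun P => L (q * P)) m.*2.+1 a b.
  apply: positive_on_mull posL.
  - by rewrite size_scale ?size_XsubC // oppr_eq0 oner_eq0.
  - by rewrite scaler_eq0 oppr_eq0 oner_eq0 polyXsubC_eq0.
  - by move=> x /andP [_ xb]; rewrite hornerZ hornerXsubC mulN1r oppr_ge0 subr_le0.
have [W0 W0_gt0 radau] := radau_weight_lower_bound (linear_functional_mull linL q) a0 posLb.
exists (W0 / b); first by rewrite divr_gt0.
move=> c cca; have /andP [c0 ca] := cca.
have [W [S [W0W sS S_ab rule]]] := radau c cca.
have W_ge0 : 0 <= W := le_trans (ltW W0_gt0) W0W.
have [S' [rule' nonneg cW]] := radau_add_endpoint linL cca ab posL W_ge0 sS S_ab rule.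
exists S', (W / (b - c)); split => //.
rewrite ler_pM ?(ltW W0_gt0) ?invr_ge0 ?(ltW b0) //.
by rewrite lef_pV2 ?posrE ?subr_gt0 ?(lt_trans ca ab) // gerDl oppr_le0 ltW.
Qed.

Lemma heavy_node_quadrature L n a b : linear_functional L -> 0 < a -> a < b ->
  positive_on L n.+1 a b -> exists2 w0, 0 < w0 & forall c, 0 < c < a ->
  exists S W, [/\ quadrature L n.+1 S, nonneg_rule_on S c b, (c, W) \in S & w0 <= W].
Proof.
rewrite -(odd_double_half n); case: (odd n); rewrite ?add1n ?add0n.
- exact: heavy_node_quadrature_odd.
- exact: heavy_node_quadrature_even.
Qed.

Lemma nonneg_rule_on_sum_ge S (c b W : R) : 0 < c -> nonneg_rule_on S c b ->
  (c, W) \in S -> W / c <= \sum_(p <- S) p.2 / p.1.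
Proof.
move=> c0 rule cW; rewrite (big_rem _ cW) /= lerDl big_seq sumr_ge0 // => p /mem_rem pS.
by have [/andP [cp _] p2] := rule p pS; rewrite divr_ge0 // (le_trans (ltW c0) cp).
Qed.

End Quadrature.

Lemma nonneg_rule_measure (R : realType) (S : seq (R * R)) (c b : R) :
  nonneg_rule_on S c b -> exists mu : {measure set R -> \bar R},
  mu (~` `[c, b]) = 0%E /\
  forall f : R -> R, measurable_fun `[c, b] f -> (forall x, c <= x <= b -> 0 <= f x) ->
    (\int[mu]_(x in `[c, b]) (f x)%:E = (\sum_(p <- S) p.2 * f p.1)%:E)%E.
Proof.
move=> rule; pose x i := (nth (0, 0) S i).1; pose w i := (nth (0, 0) S i).2.
have xw i : (i < size S)%N -> c <= x i <= b /\ 0 <= w i by move=> iS; apply/rule/mem_nth.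
pose m_ : {measure set R -> \bar R}^nat :=
  fun i => mscale (@NngNum R `|w i| (normr_ge0 _)) (\d_(x i)).
exists (msum m_ (size S)); split.
  rewrite /= /msum big1 // => i _; rewrite /m_ /= /mscale /= diracE memNset ?mule0 //=.
  by rewrite in_itv /= (xw i (ltn_ord i)).1.
move=> f mf f0.
have mfE : measurable_fun `[c, b] (EFin \o f) by apply/measurable_EFinP.
have f0E y : `[c, b]%classic y -> (0 <= (f y)%:E)%E by rewrite /= in_itv /= lee_fin => /f0.
rewrite ge0_integral_measure_sum //.
under eq_bigr => i _.
  rewrite /m_ ge0_integral_mscale // integral_dirac //= diracE mem_set /=; last first.
    by rewrite in_itv /= (xw i (ltn_ord i)).1.
  rewrite mul1e -EFinM ger0_norm ?(xw i (ltn_ord i)).2 //.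
  over.
by rewrite sumEFin (big_nth (0, 0)) big_mkord.
Qed.

Section Moments.
Variables (R : realType) (n : nat) (s : 'I_n.+1 -> R).

Lemma sigma_linear : linear_functional (sigma s).
Proof.
move=> c P Q; rewrite /sigma mulr_sumr -big_split; apply: eq_bigr => k _.
by rewrite coefD coefZ mulrDl mulrA.
Qed.

Lemma sigma_Xn (k : 'I_n.+1) : sigma s 'X^k = s k.
Proof.
rewrite /sigma (bigD1 k) //= coefXn eqxx mul1r big1 ?addr0 // => i ik.
by rewrite coefXn (negbTE (ik : (i : nat) != k)) mul0r.
Qed.

Lemma T_ab_ge_rule S (c b : R) : 0 < c -> quadrature (sigma s) n.+1 S ->
  nonneg_rule_on S c b -> ((\sum_(p <- S) p.2 / p.1)%:E <= T_ab s c b)%E.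
Proof.
move=> c0 rule nonneg; have [mu [mu0 int_mu]] := nonneg_rule_measure nonneg.
have x_gt0 x : c <= x <= b -> 0 < x by case/andP => /(lt_le_trans c0).
apply: ereal_sup_ubound; exists mu.
  split => // k; rewrite int_mu //; last by move=> x /x_gt0 /ltW /exprn_ge0.
  rewrite -sigma_Xn rule ?size_polyXn //.
  by congr (_%:E); apply: eq_bigr => p _; rewrite hornerXn.
rewrite int_mu //; last by move=> x /x_gt0 /ltW; rewrite invr_ge0.
have minv : measurable_fun `](0 : R), +oo[%classic (@GRing.inv R).
  apply: open_continuous_measurable_fun; first exact: interval_open.
  by move=> x; rewrite inE /= in_itv /= andbT => x0; apply/inv_continuous/lt0r_neq0.
apply: measurable_funS minv => // x /=.
by rewrite !in_itv /= andbT => /x_gt0.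
Qed.

End Moments.

Theorem lemma5p2 (R : realType) (n : nat) (s : 'I_n.+1 -> R) :
  (forall k : 'I_n.+1, 0 <= s k) ->
  strictly_pos_on_pos s ->
  T_infty s = +oo%E.
Proof.
move=> _ [a [b [a0 [ab posS]]]].
have posL : positive_on (sigma s) n.+1 a b.
  by move=> P sP P0 nzP; have [_] := posS P sP P0; apply.
have [w0 w0_gt0 heavy] := heavy_node_quadrature (sigma_linear s) a0 ab posL.
apply/eqyP => A A_gt0.
pose c := Num.min (a / 2) (w0 / A).
have c0 : 0 < c by rewrite lt_min !divr_gt0.
have ca : c < a by rewrite gt_min ltr_pdivrMr // ltr_pMr // ltr1n.
have cca : 0 < c < a by rewrite c0 ca.
have [S [W [rule nonneg cW w0W]]] := heavy c cca.
apply: le_trans (ereal_sup_ubound _); last by exists (c, b); split => //; apply: lt_trans ab.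
apply: le_trans (T_ab_ge_rule c0 rule nonneg); rewrite lee_fin.
apply: le_trans (nonneg_rule_on_sum_ge c0 nonneg cW).
by rewrite ler_pdivlMr // (le_trans _ w0W) // mulrC -ler_pdivlMr // ge_min lexx orbT.
Qed.
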